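(* Let $E$ be a closed term with $\vdash E:(\neg X\to X)\to X$, where $X$ is a propositional variable. Then for each $\lambda$-variable $x$, each finite sequence of $\lambda$-variables $\bar y$, and each sequence of $\lambda$-variables $(z_i)_{i\in\mathbb N^*}$ such that $x$ and the variables of $\bar y$ are different from every $z_i$, there exist $m\in\mathbb N^*$ and terms $\theta_1,\dots,\theta_m$ such that: $(E\;x)\;\bar y\triangleright^*\underline{\mu}.((x\;\theta_1)\;\bar y)$; $(\theta_k\;z_k)\triangleright^*\underline{\mu}.((x\;\theta_{k+1})\;\bar y)$ for all $1\le k\le m-1$; and $(\theta_m\;z_m)\triangleright^*\underline{\mu}.(z_l\;\bar y)$ for some $1\le l\le m$.
   Context: $\lambda\mu$-terms: $t::= x\mid \lambda x.t\mid (t\;t)\mid \mu a.t\mid (a\;t)$ over disjoint infinite sets of $\lambda$-variables and $\mu$-variables; types built from propositional variables and $\perp$ with $\to$; $\neg A$ denotes $A\to\perp$. Reduction $(\lambda x.u\;v)\triangleright u[x:=v]$, $(\mu a.u\;v)\triangleright\mu a.u[a:=^*v]$ ($u[a:=^*v]$ replaces each subterm $(a\;w)$ of $u$ by $(a\;(w\;v))$), $\triangleright^*$ its reflexive transitive compatible closure. Typing rules: (ax) $\Gamma\vdash x:A;\Delta$ if $x:A\in\Gamma$; ($\to_i$) from $\Gamma,x:A\vdash t:B;\Delta$ infer $\Gamma\vdash\lambda x.t:A\to B;\Delta$; ($\to_e$) from $\Gamma\vdash u:A\to B;\Delta$, $\Gamma\vdash v:A;\Delta$ infer $\Gamma\vdash(u\;v):B;\Delta$;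 ($\mu$) from $\Gamma\vdash t:\perp;\Delta,a:A$ infer $\Gamma\vdash\mu a.t:A;\Delta$; ($\perp$) from $\Gamma\vdash t:A;\Delta,a:A$ infer $\Gamma\vdash(a\;t):\perp;\Delta,a:A$; $\vdash$ means empty contexts. For a sequence $\bar y=y_1\dots y_n$, $t\;\bar y=((t\;y_1)\dots y_n)$. For a term $t$, $M_t$ is the smallest set containing $t$ such that $w\in M_t$ and $a$ a $\mu$-variable imply $\mu a.w\in M_t$ and $(a\;w)\in M_t$; $\underline{\mu}.t$ denotes an arbitrary element of $M_t$ (different occurrences may denote different elements). *)

(* Lambda-mu calculus with de Bruijn indices; two separate
   index spaces: lambda-variables (Var n) and mu-variables (MApp a t). *)
From Stdlib Require Import List Arith PeanoNat Relations.
Import ListNotations.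

Inductive ty : Type :=
| TVar : nat -> ty
| TBot : ty
| TArr : ty -> ty -> ty.

Definition TNeg (A : ty) : ty := TArr A TBot.

Inductive term : Type :=
| Var  : nat -> term
| Lam  : term -> term
| App  : term -> term -> term
| Mu   : term -> term
| MApp : nat -> term -> term.

Fixpoint lift_l (k : nat) (t : term) : term :=
  match t with
  | Var n => if Nat.leb k n then Var (S n) else Var n
  | Lam u => Lam (lift_l (S k) u)
  | App u v => App (lift_l k u) (lift_l k v)
  | Mu u => Mu (lift_l k u)
  | MApp a u => MApp a (lift_l k u)
  end.

Fixpoint lift_m (k : nat) (t : term) : term :=
  match t with
  | Var n => Var n
  | Lam u => Lam (lift_m k u)
  | App u v => App (lift_m k u) (lift_m k v)
  | Mu u => Mu (lift_m (S k) u)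
  | MApp a u => MApp (if Nat.leb k a then S a else a) (lift_m k u)
  end.

Fixpoint subst_l (k : nat) (u : term) (t : term) : term :=
  match t with
  | Var n => if Nat.eqb n k then u
             else if Nat.ltb k n then Var (pred n) else Var n
  | Lam w => Lam (subst_l (S k) (lift_l 0 u) w)
  | App w1 w2 => App (subst_l k u w1) (subst_l k u w2)
  | Mu w => Mu (subst_l k (lift_m 0 u) w)
  | MApp a w => MApp a (subst_l k u w)
  end.

(* structural substitution t[k :=* v]: every subterm (k w) becomes (k (w v)) *)
Fixpoint msubst (k : nat) (v : term) (t : term) : term :=
  match t with
  | Var n => Var n
  | Lam w => Lam (msubst k (lift_l 0 v) w)
  | App w1 w2 => App (msubst k v w1) (msubst k v w2)
  | Mu w => Mu (msubst (S k) (lift_m 0 v) w)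
  | MApp a w => if Nat.eqb a k then MApp a (App (msubst k v w) v)
                else MApp a (msubst k v w)
  end.

Inductive step : term -> term -> Prop :=
| step_beta : forall u v, step (App (Lam u) v) (subst_l 0 v u)
| step_mu   : forall u v, step (App (Mu u) v) (Mu (msubst 0 (lift_m 0 v) u))
| step_lam  : forall t t', step t t' -> step (Lam t) (Lam t')
| step_appl : forall t t' u, step t t' -> step (App t u) (App t' u)
| step_appr : forall t u u', step u u' -> step (App t u) (App t u')
| step_mu_c : forall t t', step t t' -> step (Mu t) (Mu t')
| step_mapp : forall a t t', step t t' -> step (MApp a t) (MApp a t').

Definition red : term -> term -> Prop := clos_refl_trans term step.

(* Typing  Gamma |- t : A ; Delta  (contexts are lists indexed by de Bruijn) *)
Inductive typing : list ty -> term -> ty -> list ty -> Prop :=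
| ty_ax  : forall G D n A, nth_error G n = Some A -> typing G (Var n) A D
| ty_lam : forall G D A B t, typing (A :: G) t B D -> typing G (Lam t) (TArr A B) D
| ty_app : forall G D A B u v,
    typing G u (TArr A B) D -> typing G v A D -> typing G (App u v) B D
| ty_mu  : forall G D A t, typing G t TBot (A :: D) -> typing G (Mu t) A D
| ty_bot : forall G D a A t,
    nth_error D a = Some A -> typing G t A D -> typing G (MApp a t) TBot D.

(* closedness: no free lambda- or mu-variables
   (l, m = number of enclosing lambda-, resp. mu-binders) *)
Fixpoint closed_at (l m : nat) (t : term) : Prop :=
  match t with
  | Var n => n < l
  | Lam u => closed_at (S l) m u
  | App u v => closed_at l m u /\ closed_at l m v
  | Mu u => closed_at l (S m) u
  | MApp a u => a < m /\ closed_at l m u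
  end.

Definition closed (t : term) : Prop := closed_at 0 0 t.

Definition apps (t : term) (ys : list nat) : term :=
  fold_left (fun acc y => App acc (Var y)) ys t.

(* M_t : smallest set containing t, closed under w |-> mu a.w and w |-> (a w).
   (In de Bruijn form: the mu-prefix may capture free mu-variables of t.) *)
Inductive in_M (t : term) : term -> Prop :=
| inM_base : in_M t t
| inM_mu   : forall w, in_M t w -> in_M t (Mu w)
| inM_mapp : forall a w, in_M t w -> in_M t (MApp a w).

Definition red_to_M (t s : term) : Prop := exists w, red t w /\ in_M s w.

(* A realizability argument.  Fix x, ys and the z_i, and call a term good at
   stage j when it reduces to mu_.(z_l ys) for some l < j, or to
   mu_.((x th) ys) with (th z_j) good at stage j+1.  Interpret a type as a set
   of stacks: X by ys, bot by the empty stack, A -> B by u :: pi where u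
   realizes A (is good against every stack of A, at every later stage and up
   to mu-renaming) and pi is a stack of B.  By induction on typing
   derivations, a typed term instantiated by realizers is good against every
   stack of its type.  The variable x realizes ~X -> X from stage 1 on: for a
   realizer th of ~X, z_j realizes X at stage j+1 (z_j ys is an end case), so
   th z_j is good at stage j+1 and x th ys is good at stage j.  Hence E x ys is
   good at stage 1, and unfolding goodness gives the chain. *)
From Stdlib Require Import List Arith Lia FunctionalExtensionality Relations.
Import ListNotations.

(** * Renaming of mu-variables *)

Definition upr (r : nat -> nat) (a : nat) : nat :=
  match a with 0 => 0 | S a' => S (r a') end.

Fixpoint ren (r : nat -> nat) (t : term) : term :=
  match t with
  | Var n => Var n
  | Lam u => Lam (ren r u)
  | App u v => App (ren r u) (ren r v)
  | Mu u => Mu (ren (upr r) u)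
  | MApp a u => MApp (r a) (ren r u)
  end.

Definition liftr (k a : nat) : nat := if Nat.leb k a then S a else a.

Lemma lift_m_ren t k : lift_m k t = ren (liftr k) t.
Proof.
  revert k; induction t; intros k; simpl; try rewrite IHt;
    try rewrite IHt1, IHt2; auto.
  do 2 f_equal; extensionality a.
  destruct a; unfold upr, liftr; simpl; try destruct (Nat.leb _ _); reflexivity.
Qed.

Lemma ren_comp t r r' : ren r (ren r' t) = ren (fun a => r (r' a)) t.
Proof.
  revert r r'; induction t; intros r r'; simpl; try rewrite IHt;
    try rewrite IHt1, IHt2; auto.
  do 2 f_equal; extensionality a; destruct a; reflexivity.
Qed.

Lemma ren_id t : ren (fun a => a) t = t.
Proof.
  induction t; simpl; try rewrite IHt; try rewrite IHt1, IHt2; auto.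
  f_equal; rewrite <- IHt at 2; f_equal.
  extensionality a; destruct a; reflexivity.
Qed.

Lemma ren_lift_l t r c : ren r (lift_l c t) = lift_l c (ren r t).
Proof.
  revert r c; induction t; intros r c; simpl; try rewrite IHt;
    try rewrite IHt1, IHt2; auto.
  destruct (Nat.leb c n); reflexivity.
Qed.

Lemma ren_upr_lift_m u r : ren (upr r) (lift_m 0 u) = lift_m 0 (ren r u).
Proof. rewrite !lift_m_ren, !ren_comp; reflexivity. Qed.

Lemma lift_m_lift_l u c : lift_m 0 (lift_l c u) = lift_l c (lift_m 0 u).
Proof. rewrite !lift_m_ren; apply ren_lift_l. Qed.

Lemma upr_inj r : (forall a b, r a = r b -> a = b) ->
  forall a b, upr r a = upr r b -> a = b.
Proof.
  intros Hr [|a] [|b]; simpl; intros E; try discriminate; auto.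
Qed.

Ltac index_cases := repeat (simpl; match goal with
  | |- context [Nat.leb ?a ?b] => destruct (Nat.leb_spec a b)
  | |- context [Nat.eqb ?a ?b] => destruct (Nat.eqb_spec a b)
  | |- context [Nat.ltb ?a ?b] => destruct (Nat.ltb_spec a b)
  | |- context [match ?n with 0 => _ | S _ => _ end] => destruct n
  end); simpl.

Lemma lift_l_lift_l t c c' : c' <= c ->
  lift_l c' (lift_l c t) = lift_l (S c) (lift_l c' t).
Proof.
  revert c c'; induction t; intros c c' H; simpl; try rewrite IHt by lia;
    try rewrite IHt1, IHt2 by lia; auto.
  index_cases; try reflexivity; f_equal; lia.
Qed.

Lemma subst_lift w k u : subst_l k u (lift_l k w) = w.
Proof.
  revert k u; induction w; intros k u; simpl; try rewrite IHw;
    try rewrite IHw1, IHw2; auto.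
  index_cases; try reflexivity; try (f_equal; lia); lia.
Qed.

Lemma subst_lift_comm w k c u : c <= k ->
  subst_l (S k) (lift_l c u) (lift_l c w) = lift_l c (subst_l k u w).
Proof.
  revert k c u; induction w; intros k c u H; simpl.
  - index_cases; try reflexivity; try (f_equal; lia); lia.
  - f_equal; rewrite lift_l_lift_l by lia; apply IHw; lia.
  - f_equal; auto.
  - f_equal; rewrite lift_m_lift_l; apply IHw; lia.
  - f_equal; auto.
Qed.

Lemma lift_l_msubst w k c v :
  lift_l c (msubst k v w) = msubst k (lift_l c v) (lift_l c w).
Proof.
  revert k c v; induction w; intros k c v; simpl.
  - index_cases; reflexivity.
  - f_equal; rewrite IHw, (lift_l_lift_l v c 0) by lia; reflexivity.
  - f_equal; auto.
  - f_equal; rewrite IHw, lift_m_lift_l; reflexivity.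
  - destruct (Nat.eqb n k); simpl; rewrite IHw; reflexivity.
Qed.

Lemma ren_subst w r k u :
  ren r (subst_l k u w) = subst_l k (ren r u) (ren r w).
Proof.
  revert r k u; induction w; intros r k u; simpl.
  - index_cases; reflexivity.
  - f_equal; rewrite IHw, ren_lift_l; reflexivity.
  - f_equal; auto.
  - f_equal; rewrite IHw, ren_upr_lift_m; reflexivity.
  - f_equal; auto.
Qed.

Lemma ren_msubst w r k v : (forall a b, r a = r b -> a = b) ->
  ren r (msubst k v w) = msubst (r k) (ren r v) (ren r w).
Proof.
  revert r k v; induction w; intros r k v Hr; simpl.
  - reflexivity.
  - f_equal; rewrite IHw, ren_lift_l by auto; reflexivity.
  - f_equal; auto.
  - f_equal; rewrite IHw by (apply upr_inj; auto).
    rewrite ren_upr_lift_m; reflexivity.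
  - destruct (Nat.eqb_spec n k), (Nat.eqb_spec (r n) (r k)); simpl;
      try rewrite IHw by auto; auto; [congruence | apply Hr in e; congruence].
Qed.

Lemma msubst_ren_fresh w r k v : (forall a, r a <> k) ->
  msubst k v (ren r w) = ren r w.
Proof.
  revert r k v; induction w; intros r k v Hr; simpl; f_equal; auto.
  - apply IHw; intros [|a]; simpl; auto.
  - destruct (Nat.eqb_spec (r n) k); [exfalso; eapply Hr; eauto|].
    f_equal; auto.
Qed.

Lemma msubst_lift_m w v : msubst 0 v (lift_m 0 w) = lift_m 0 w.
Proof.
  rewrite lift_m_ren; apply msubst_ren_fresh.
  intros a; unfold liftr; simpl; lia.
Qed.

Lemma lift_m_msubst w k v :
  lift_m 0 (msubst k v w) = msubst (S k) (lift_m 0 v) (lift_m 0 w).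
Proof.
  rewrite !lift_m_ren; apply ren_msubst; unfold liftr; simpl; intros; lia.
Qed.

Lemma lift_m_subst w k u :
  lift_m 0 (subst_l k u w) = subst_l k (lift_m 0 u) (lift_m 0 w).
Proof. rewrite !lift_m_ren; apply ren_subst. Qed.

(** * Simultaneous instantiation *)

Definition app_list (t : term) (l : list term) : term := fold_left App l t.

Lemma app_list_app l1 l2 t :
  app_list t (l1 ++ l2) = app_list (app_list t l1) l2.
Proof. apply fold_left_app. Qed.

Lemma apps_app_list ys t : apps t ys = app_list t (map Var ys).
Proof. revert t; induction ys; intros; simpl; auto. Qed.

Lemma app_list_map (f : term -> term) :
  (forall a b, f (App a b) = App (f a) (f b)) ->
  forall l t, f (app_list t l) = app_list (f t) (map f l).
Proof. intros Hf; induction l; intros; simpl; auto; rewrite IHl, Hf; auto. Qed.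

Definition upl (s : nat -> term) (n : nat) : term :=
  match n with 0 => Var 0 | S n' => lift_l 0 (s n') end.

Definition scons {A} (h : A) (r : nat -> A) (a : nat) : A :=
  match a with 0 => h | S a' => r a' end.

(* [inst s p tau t] replaces the lambda-variable n by [s n] and every subterm
   (a w) by (tau a) (w p_a), with p_a the list of arguments [p a]: this is the
   closed form of a beta-substitution followed by structural substitutions. *)
Fixpoint inst (s : nat -> term) (p : nat -> list term) (tau : nat -> nat)
  (t : term) : term :=
  match t with
  | Var n => s n
  | Lam u => Lam (inst (upl s) (fun a => map (lift_l 0) (p a)) tau u)
  | App u v => App (inst s p tau u) (inst s p tau v)
  | Mu u => Mu (inst (fun n => lift_m 0 (s n))
                  (scons [] (fun a => map (lift_m 0) (p a))) (upr tau) u)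
  | MApp a u => MApp (tau a) (app_list (inst s p tau u) (p a))
  end.

Lemma inst_id t : inst Var (fun _ => []) (fun a => a) t = t.
Proof.
  induction t; simpl; auto; f_equal; auto; rewrite <- IHt at 2; f_equal;
    extensionality a; destruct a; reflexivity.
Qed.

Lemma ren_inst t r s p tau : ren r (inst s p tau t) =
  inst (fun n => ren r (s n)) (fun a => map (ren r) (p a)) (fun a => r (tau a)) t.
Proof.
  revert r s p tau; induction t; intros r s p tau; simpl; auto.
  - f_equal; rewrite IHt; f_equal.
    + extensionality n; destruct n; simpl; auto; apply ren_lift_l.
    + extensionality a; rewrite !map_map; apply map_ext; intros; apply ren_lift_l.
  - f_equal; auto.
  - f_equal; rewrite IHt; f_equal.
    + extensionality n; apply ren_upr_lift_m.
    + extensionality a; destruct a; simpl; auto.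
      rewrite !map_map; apply map_ext; intros; apply ren_upr_lift_m.
    + extensionality a; destruct a; reflexivity.
  - f_equal; rewrite (app_list_map (ren r)), IHt by reflexivity; reflexivity.
Qed.

Lemma subst_inst t k u s p tau : subst_l k u (inst s p tau t) =
  inst (fun n => subst_l k u (s n)) (fun a => map (subst_l k u) (p a)) tau t.
Proof.
  revert k u s p tau; induction t; intros k u s p tau; simpl; auto.
  - f_equal; rewrite IHt; f_equal.
    + extensionality n; destruct n; simpl; auto.
      apply (subst_lift_comm (s n) k 0 u); lia.
    + extensionality a; rewrite !map_map; apply map_ext; intros w.
      apply (subst_lift_comm w k 0 u); lia.
  - f_equal; auto.
  - f_equal; rewrite IHt; f_equal.
    + extensionality n; symmetry; apply lift_m_subst.
    + extensionality a; destruct a; simpl; auto.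
      rewrite !map_map; apply map_ext; intros; symmetry; apply lift_m_subst.
  - f_equal; rewrite (app_list_map (subst_l k u)), IHt by reflexivity.
    reflexivity.
Qed.

Lemma subst_inst_upl t u s p tau :
  subst_l 0 u (inst (upl s) (fun a => map (lift_l 0) (p a)) tau t) =
  inst (scons u s) p tau t.
Proof.
  rewrite subst_inst; f_equal.
  - extensionality n; destruct n; simpl; auto; apply subst_lift.
  - extensionality a; rewrite map_map; rewrite <- (map_id (p a)) at 2.
    apply map_ext; intros; apply subst_lift.
Qed.

Lemma msubst_inst t k v s p tau : msubst k v (inst s p tau t) =
  inst (fun n => msubst k v (s n))
       (fun a => map (msubst k v) (p a) ++ (if Nat.eqb (tau a) k then [v] else []))
       tau t.
Proof.
  revert k v s p tau; induction t; intros k v s p tau; simpl; auto.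
  - f_equal; rewrite IHt; f_equal.
    + extensionality n; destruct n; simpl; auto; symmetry; apply lift_l_msubst.
    + extensionality a; rewrite map_app, !map_map; f_equal.
      * apply map_ext; intros; symmetry; apply lift_l_msubst.
      * destruct (Nat.eqb (tau a) k); reflexivity.
  - f_equal; auto.
  - f_equal; rewrite IHt; f_equal.
    + extensionality n; symmetry; apply lift_m_msubst.
    + extensionality a; destruct a; simpl; auto; rewrite map_app, !map_map; f_equal.
      * apply map_ext; intros; symmetry; apply lift_m_msubst.
      * destruct (Nat.eqb (tau a) k); reflexivity.
  - rewrite (app_list_map (msubst k v)), IHt by reflexivity.
    destruct (Nat.eqb (tau n) k); simpl.
    + rewrite app_list_app; reflexivity.
    + rewrite app_nil_r; reflexivity.
Qed.

Lemma red_cong (f : term -> term) : (forall a b, step a b -> step (f a) (f b)) ->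
  forall a b, red a b -> red (f a) (f b).
Proof.
  intros Hf a b H; induction H; [apply rt_step; auto | apply rt_refl |].
  eapply rt_trans; eauto.
Qed.

Lemma red_app_list l a b : red a b -> red (app_list a l) (app_list b l).
Proof.
  revert a b; induction l; intros; simpl; auto; apply IHl.
  apply (red_cong (fun t => App t a)); auto; intros; constructor; auto.
Qed.

Lemma red_Mu a b : red a b -> red (Mu a) (Mu b).
Proof. apply red_cong; intros; constructor; auto. Qed.

Lemma red_MApp n a b : red a b -> red (MApp n a) (MApp n b).
Proof. apply red_cong; intros; constructor; auto. Qed.

(* Each mu-step appends the argument to the stack attached to the bound
   mu-variable 0; the side conditions say that nothing else mentions it. *)
Lemma red_Mu_inst_app_list pi acc s p tau t :
  (forall n v, msubst 0 v (s n) = s n) ->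
  (forall a v, map (msubst 0 v) (p a) = p a) ->
  (forall v, map (msubst 0 v) acc = acc) ->
  red (app_list (Mu (inst s (scons acc p) (upr tau) t)) pi)
      (Mu (inst s (scons (acc ++ map (lift_m 0) pi) p) (upr tau) t)).
Proof.
  revert acc; induction pi as [|u pi IH]; intros acc Hs Hp Ha; simpl.
  - rewrite app_nil_r; apply rt_refl.
  - eapply rt_trans; [apply red_app_list, rt_step, step_mu|].
    rewrite msubst_inst.
    replace (fun n => msubst 0 (lift_m 0 u) (s n)) with s
      by (extensionality n; auto).
    replace (fun a => map (msubst 0 (lift_m 0 u)) (scons acc p a) ++
                      (if Nat.eqb (upr tau a) 0 then [lift_m 0 u] else []))
      with (scons (acc ++ [lift_m 0 u]) p)
      by (extensionality a; destruct a; simpl;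
          [rewrite Ha | rewrite Hp, app_nil_r]; reflexivity).
    replace (acc ++ lift_m 0 u :: map (lift_m 0) pi)
      with ((acc ++ [lift_m 0 u]) ++ map (lift_m 0) pi)
      by (rewrite <- app_assoc; reflexivity).
    apply IH; auto.
    intros v; rewrite map_app, Ha; simpl; rewrite msubst_lift_m; reflexivity.
Qed.

Lemma red_to_M_red t t' s : red t t' -> red_to_M t' s -> red_to_M t s.
Proof. intros H [w [H1 H2]]; exists w; split; auto; eapply rt_trans; eauto. Qed.

Lemma red_to_M_Mu t s : red_to_M t s -> red_to_M (Mu t) s.
Proof. intros [w [H1 H2]]; exists (Mu w); split; [apply red_Mu | constructor]; auto. Qed.

Lemma red_to_M_MApp a t s : red_to_M t s -> red_to_M (MApp a t) s.
Proof.
  intros [w [H1 H2]]; exists (MApp a w); split; [apply red_MApp | constructor]; auto.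
Qed.

Lemma red_to_M_refl t : red_to_M t t.
Proof. exists t; split; [apply rt_refl | constructor]. Qed.

(** * Realizability *)

Section Realizability.

Variables (x : nat) (ys : list nat) (z : nat -> nat).

Inductive good : nat -> term -> Prop :=
| good_end j t l : 1 <= l -> l < j ->
    red_to_M t (apps (Var (z l)) ys) -> good j t
| good_step j t th : red_to_M t (apps (App (Var x) th) ys) ->
    good (S j) (App th (Var (z j))) -> good j t.

Lemma good_red j t t' : red t t' -> good j t' -> good j t.
Proof.
  intros H G; inversion G; subst;
    [eapply good_end | eapply good_step]; eauto; eapply red_to_M_red; eauto.
Qed.

Lemma good_Mu j t : good j t -> good j (Mu t).
Proof.
  intros G; inversion G; subst; [eapply good_end | eapply good_step]; eauto;
    apply red_to_M_Mu; auto.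
Qed.

Lemma good_MApp j a t : good j t -> good j (MApp a t).
Proof.
  intros G; inversion G; subst; [eapply good_end | eapply good_step]; eauto;
    apply red_to_M_MApp; auto.
Qed.

(* Realizers are closed under mu-renaming because they must survive the
   re-indexing of mu-variables when they are moved under a mu-binder. *)
Fixpoint stack (A : ty) (j : nat) (pi : list term) : Prop :=
  match A with
  | TVar _ => pi = map Var ys
  | TBot => pi = []
  | TArr A1 B =>
      match pi with
      | [] => False
      | u :: pi' =>
          (forall r j', j <= j' -> forall pi0, stack A1 j' pi0 ->
             good j' (app_list (ren r u) pi0)) /\ stack B j pi'
      end
  end.

Definition realizes (A : ty) (j : nat) (u : term) : Prop :=
  forall r j', j <= j' -> forall pi, stack A j' pi -> good j' (app_list (ren r u) pi).

Lemma realizes_mono A j j' u : j <= j' -> realizes A j u -> realizes A j' u.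
Proof. unfold realizes; intros; apply H0; auto; lia. Qed.

Lemma realizes_ren A j u r : realizes A j u -> realizes A j (ren r u).
Proof. unfold realizes; intros; rewrite ren_comp; auto. Qed.

Lemma stack_mono A j j' pi : j <= j' -> stack A j pi -> stack A j' pi.
Proof.
  revert j j' pi; induction A; intros j j' pi Hj H; simpl in *; auto.
  destruct pi as [|u pi]; auto; destruct H as [Hu Hpi]; split; eauto.
  intros; apply Hu; auto; lia.
Qed.

Lemma stack_ren A j pi r : stack A j pi -> stack A j (map (ren r) pi).
Proof.
  revert j pi; induction A; intros j pi H; simpl in *; subst; auto.
  - rewrite map_map; reflexivity.
  - destruct pi as [|u pi]; auto; destruct H as [Hu Hpi]; split; auto.
    apply (realizes_ren A1 j u r Hu).
Qed.

Lemma stack_lift_m A j pi : stack A j pi -> stack A j (map (lift_m 0) pi).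
Proof.
  intros H; replace (map (lift_m 0) pi) with (map (ren (liftr 0)) pi)
    by (apply map_ext; intros; symmetry; apply lift_m_ren).
  apply stack_ren; auto.
Qed.

Definition env_realizes (G D : list ty) (j : nat) (s : nat -> term)
  (p : nat -> list term) : Prop :=
  (forall n B, nth_error G n = Some B -> realizes B j (s n)) /\
  (forall a B, nth_error D a = Some B -> stack B j (p a)).

Definition adequate (G D : list ty) (t : term) (A : ty) : Prop :=
  forall s p tau j, env_realizes G D j s p ->
  forall pi, stack A j pi -> good j (app_list (inst s p tau t) pi).

Lemma env_realizes_mono_ren G D j j' s p r : j <= j' -> env_realizes G D j s p ->
  env_realizes G D j' (fun n => ren r (s n)) (fun a => map (ren r) (p a)).
Proof.
  intros Hj [Hs Hp]; split; intros.
  - apply realizes_ren; eapply realizes_mono; eauto.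
  - apply stack_ren; eapply stack_mono; eauto.
Qed.

Lemma adequate_realizes G D t A : adequate G D t A ->
  forall s p tau j, env_realizes G D j s p -> realizes A j (inst s p tau t).
Proof.
  intros H s p tau j Hsp r j' Hj pi Hpi; rewrite ren_inst.
  apply H; auto; eapply env_realizes_mono_ren; eauto.
Qed.

Lemma adequate_lam G D A B t :
  adequate (A :: G) D t B -> adequate G D (Lam t) (TArr A B).
Proof.
  intros IH s p tau j [Hs Hp] [|u pi] Hpi; simpl in Hpi; [contradiction|].
  destruct Hpi as [Hu Hpi]; simpl.
  eapply good_red; [apply red_app_list, rt_step, step_beta|].
  rewrite subst_inst_upl; apply IH; auto; split; auto.
  intros [|n] B0 E; simpl in E; [injection E; intros; subst; exact Hu | eauto].
Qed.

Lemma adequate_app G D A B u v :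
  adequate G D u (TArr A B) -> adequate G D v A -> adequate G D (App u v) B.
Proof.
  intros IHu IHv s p tau j Hsp pi Hpi.
  change (good j (app_list (inst s p tau u) (inst s p tau v :: pi))).
  apply IHu; auto; split; auto; eapply adequate_realizes; eauto.
Qed.

Lemma adequate_mu G D A t :
  adequate G (A :: D) t TBot -> adequate G D (Mu t) A.
Proof.
  intros IH s p tau j [Hs Hp] pi Hpi; simpl.
  eapply good_red.
  - apply (red_Mu_inst_app_list pi [] _ _ tau t); intros;
      [apply msubst_lift_m | | reflexivity].
    simpl; rewrite map_map; apply map_ext; intros; apply msubst_lift_m.
  - apply good_Mu; refine (IH _ _ _ _ _ [] eq_refl); split.
    + intros n B E; rewrite lift_m_ren; apply realizes_ren; eauto.
    + intros [|a] B E; simpl in E;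
        [injection E; intros; subst | ]; apply stack_lift_m; eauto.
Qed.

Lemma adequate_bot G D a A t :
  nth_error D a = Some A -> adequate G D t A -> adequate G D (MApp a t) TBot.
Proof.
  intros Ha IH s p tau j Hsp pi Hpi; simpl in Hpi; subst pi; simpl.
  apply good_MApp; rewrite <- (ren_id (inst s p tau t)).
  apply (adequate_realizes G D t A IH s p tau j Hsp); auto; apply Hsp; auto.
Qed.

Theorem adequacy G t A D : typing G t A D -> adequate G D t A.
Proof.
  induction 1.
  - intros s p tau j [Hs _] pi Hpi; simpl.
    rewrite <- (ren_id (s n)); apply (Hs n A H); auto.
  - apply adequate_lam; auto.
  - eapply adequate_app; eauto.
  - apply adequate_mu; auto.
  - eapply adequate_bot; eauto.
Qed.

Lemma var_realizes_neg_imp X : realizes (TArr (TNeg (TVar X)) (TVar X)) 1 (Var x).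
Proof.
  intros r j Hj [|th pi] Hpi; simpl in Hpi; [contradiction|].
  destruct Hpi as [Hth ->]; simpl; rewrite <- apps_app_list.
  apply good_step with th; [apply red_to_M_refl|].
  specialize (Hth (fun a => a) (S j) (le_S _ _ (le_n _)) [Var (z j)]).
  rewrite ren_id in Hth; apply Hth; simpl; split; auto.
  intros r' k Hk pi ->; simpl; rewrite <- apps_app_list.
  apply good_end with j; [lia | lia | apply red_to_M_refl].
Qed.

Lemma good_chain j t : good j t ->
  (exists l, 1 <= l /\ l < j /\ red_to_M t (apps (Var (z l)) ys)) \/
  exists m th, j <= m /\ red_to_M t (apps (App (Var x) (th j)) ys) /\
    (forall k, j <= k -> k <= m - 1 ->
       red_to_M (App (th k) (Var (z k))) (apps (App (Var x) (th (S k))) ys)) /\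
    (exists l, 1 <= l /\ l <= m /\
       red_to_M (App (th m) (Var (z m))) (apps (Var (z l)) ys)).
Proof.
  induction 1 as [j t l Hl Hlj Ht | j t th Ht _ IH]; [left; eauto|right].
  destruct IH as [[l [H1 [H2 H3]]] | [m [th' [H1 [H2 [H3 H4]]]]]].
  - exists j, (fun _ => th); repeat split; auto; [intros; lia|].
    exists l; repeat split; auto; lia.
  - exists m, (fun k => if Nat.eqb k j then th else th' k); repeat split.
    + lia.
    + rewrite Nat.eqb_refl; auto.
    + intros k Hk1 Hk2; destruct (Nat.eqb_spec k j) as [->|].
      * destruct (Nat.eqb_spec (S j) j); [lia | auto].
      * destruct (Nat.eqb_spec (S k) j); [lia | apply H3; lia].
    + destruct (Nat.eqb_spec m j); [lia | auto].
Qed.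

End Realizability.

Theorem mainTheorem9 (E : term) (X : nat)
  (hclosed : closed E)
  (htype : typing nil E (TArr (TArr (TNeg (TVar X)) (TVar X)) (TVar X)) nil)
  (x : nat) (ys : list nat) (z : nat -> nat)
  (hz : forall i, 1 <= i -> z i <> x /\ ~ In (z i) ys) :
  exists (m : nat) (theta : nat -> term),
    1 <= m /\
    red_to_M (apps (App E (Var x)) ys) (apps (App (Var x) (theta 1)) ys) /\
    (forall k, 1 <= k -> k <= m - 1 ->
       red_to_M (App (theta k) (Var (z k))) (apps (App (Var x) (theta (S k))) ys)) /\
    (exists l, 1 <= l /\ l <= m /\
       red_to_M (App (theta m) (Var (z m))) (apps (Var (z l)) ys)).
Proof.
  assert (Hgood : good x ys z 1 (apps (App E (Var x)) ys)).
  { rewrite apps_app_list.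
    change (good x ys z 1 (app_list E (Var x :: map Var ys))).
    rewrite <- (inst_id E).
    apply (adequacy x ys z _ _ _ _ htype Var (fun _ => []) (fun a => a) 1).
    - split; intros [|n] B e; discriminate.
    - split; [exact (var_realizes_neg_imp x ys z X) | reflexivity]. }
  destruct (good_chain x ys z 1 _ Hgood) as [[l [? [? _]]] | Hchain]; [lia|].
  exact Hchain.
Qed.
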